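(* Let $n\ge2$ and $\alpha^{(1)},\dots,\alpha^{(n-2)}\in\mathbb{R}$. The assignment $$h\mapsto qp,\quad x_-\mapsto-q^2/2,\quad x_+\mapsto p^2/2,\quad y_{i,-}\mapsto-\alpha^{(i)}q,\quad y_{i,+}\mapsto\alpha^{(i)}p,\quad z_{i,j}\mapsto\alpha^{(i)}\alpha^{(j)}$$ extends to a Poisson algebra homomorphism $D_n:S\mathfrak{g}_n\to C^\infty(\mathbb{R}^2)$ (one degree of freedom canonical symplectic realisation). Moreover, for $N\ge1$ and vectors $\boldsymbol\alpha^{(1)},\dots,\boldsymbol\alpha^{(n-2)}\in\mathbb{R}^N$, the assignment $$h\mapsto\mathbf q\cdot\mathbf p,\quad x_-\mapsto-\mathbf q^2/2,\quad x_+\mapsto\mathbf p^2/2,\quad y_{i,-}\mapsto-\boldsymbol\alpha^{(i)}\cdot\mathbf q,\quad y_{i,+}\mapsto\boldsymbol\alpha^{(i)}\cdot\mathbf p,\quad z_{i,j}\mapsto\boldsymbol\alpha^{(i)}\cdot\boldsymbol\alpha^{(j)}$$ extends to a Poisson algebra homomorphism $S\mathfrak{g}_n\to C^\infty(\mathbb{R}^{2N})$ (the $N$ degrees of freedom canonical realisation obtained as $D_n^{\otimes N}$ composed with the $N$-th primitive coproduct, the $i$-th site using the constants given by the $i$-th components of the $\boldsymbol\alpha^{(j)}$).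
   Context: For $n\ge2$, $\mathfrak{g}_n$ is the real Lie algebra with basis $h,x_-,x_+$, $y_{i,\pm}$ ($1\le i\le n-2$), $z_{i,j}$ ($1\le i\le j\le n-2$), whose nonzero brackets (up to antisymmetry) are $[x_+,x_-]=h$, $[h,x_\pm]=\pm2x_\pm$, $[h,y_{i,\pm}]=\pm y_{i,\pm}$, $[x_-,y_{i,+}]=y_{i,-}$, $[x_+,y_{i,-}]=y_{i,+}$, $[y_{i,+},y_{j,-}]=z_{\min(i,j),\max(i,j)}$; all other brackets vanish. $S\mathfrak{g}_n$ is the polynomial algebra in the basis elements with the Lie–Poisson bracket $\{f,g\}=\sum_{i,j,k}c_{ij}^kx_k\,\partial_{x_i}f\,\partial_{x_j}g$ extending the Lie bracket. $C^\infty(\mathbb{R}^{2N})$ with Darboux coordinates $\mathbf q=(q_1,\dots,q_N)$, $\mathbf p=(p_1,\dots,p_N)$ carries the canonical bracket $\{f,g\}=\sum_k(\partial_{q_k}f\,\partial_{p_k}g-\partial_{q_k}g\,\partial_{p_k}f)$; for $N=1$ write $(q,p)$. The primitive coproduct is $\Delta(x)=x\otimes1+1\otimes x$ on generators. *)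

From HB Require Import structures.
From mathcomp Require Import all_boot all_order all_algebra.
From mathcomp Require Import all_classical all_reals all_analysis.
From mathcomp Require mpoly.
Import (canonicals, coercions) mpoly.

Set Implicit Arguments.
Unset Strict Implicit.
Unset Printing Implicit Defensive.

Import Order.TTheory GRing.Theory Num.Theory.
Local Open Scope ring_scope.

(* The basis of g_n, with m = n - 2:  h, x_-, x_+, y_{i,-}, y_{i,+}          *)
(* (i < m, i.e. 1 <= i+1 <= n-2) and z_{i,j} for i <= j.                      *)

Definition zidx (m : nat) := {ij : 'I_m * 'I_m | (ij.1 <= ij.2)%N}.

Inductive gen (m : nat) : Type :=
  | GH | GXm | GXp
  | GYm of 'I_m
  | GYp of 'I_m
  | GZ of zidx m.

Arguments GH {m}. Arguments GXm {m}. Arguments GXp {m}.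

Section GenFin.
Variable m : nat.
Definition gen_enc (g : gen m) :
  (unit + unit + unit + 'I_m + 'I_m + zidx m)%type :=
  match g with
  | GH => inl (inl (inl (inl (inl tt))))
  | GXm => inl (inl (inl (inl (inr tt))))
  | GXp => inl (inl (inl (inr tt)))
  | GYm i => inl (inl (inr i))
  | GYp i => inl (inr i)
  | GZ z => inr z
  end.
Definition gen_dec (s : (unit + unit + unit + 'I_m + 'I_m + zidx m)%type) : gen m :=
  match s with
  | inl (inl (inl (inl (inl _)))) => GH
  | inl (inl (inl (inl (inr _)))) => GXm
  | inl (inl (inl (inr _))) => GXp
  | inl (inl (inr i)) => GYm i
  | inl (inr i) => GYp i
  | inr z => GZ z
  end.
Lemma gen_encK : cancel gen_enc gen_dec. Proof. by case. Qed.
HB.instance Definition _ := Countable.copy (gen m) (can_type gen_encK).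
HB.instance Definition _ := Finite.copy (gen m) (can_type gen_encK).
End GenFin.

Lemma zmk_proof m (i j : 'I_m) :
  ((if (i <= j)%N then (i, j) else (j, i)).1 <= (if (i <= j)%N then (i, j) else (j, i)).2)%N.
Proof. by case: (ssrnat.leqP i j) => [//|/ltnW]. Qed.
Definition zmk m (i j : 'I_m) : zidx m :=
  exist _ (if (i <= j)%N then (i, j) else (j, i)) (zmk_proof i j).

(* S g_n : polynomial algebra over R in the basis elements of g_n.          *)
Section Sym.
Variables (R : realType) (m : nat).

Definition Sg := mpoly.mpoly #|{: gen m}| R.

Definition gX (g : gen m) : Sg := mpoly.mpolyX R (mpoly.mnm1 (enum_rank g)).

Definition gD (g : gen m) (f : Sg) : Sg := mpoly.mderiv (enum_rank g) f.

Definition lie_br (a b : gen m) : Sg :=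
  match a, b with
  | GXp, GXm => gX GH
  | GXm, GXp => - gX GH
  | GH, GXp => gX GXp *+ 2
  | GXp, GH => - (gX GXp *+ 2)
  | GH, GXm => - (gX GXm *+ 2)
  | GXm, GH => gX GXm *+ 2
  | GH, GYp i => gX (GYp i)
  | GYp i, GH => - gX (GYp i)
  | GH, GYm i => - gX (GYm i)
  | GYm i, GH => gX (GYm i)
  | GXm, GYp i => gX (GYm i)
  | GYp i, GXm => - gX (GYm i)
  | GXp, GYm i => gX (GYp i)
  | GYm i, GXp => - gX (GYp i)
  | GYp i, GYm j => gX (GZ (zmk i j))
  | GYm j, GYp i => - gX (GZ (zmk i j))
  | _, _ => 0
  end.

Definition lie_poisson (f g : Sg) : Sg :=
  \sum_(a : gen m) \sum_(b : gen m) lie_br a b * gD a f * gD b g.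

End Sym.

Section Smooth.
Variables (R : realType) (V : normedModType R).

Fixpoint iter_derive (vs : seq V) (f : V -> R) : V -> R :=
  match vs with
  | [::] => f
  | v :: vs' => fun x => derive (iter_derive vs' f) x v
  end.

Definition smooth (f : V -> R) : Prop :=
  forall (vs : seq V) (x : V), differentiable (iter_derive vs f) x.

Definition poisson_hom (m : nat) (br : (V -> R) -> (V -> R) -> (V -> R))
  (phi : Sg R m -> (V -> R)) : Prop :=
  [/\ forall p, smooth (phi p),
      forall (a : R) (p q : Sg R m), phi (a *: p + q) = (fun x => a * phi p x + phi q x),
      forall p q : Sg R m, phi (p * q) = (fun x => phi p x * phi q x),
      phi 1 = (fun _ => 1)
    & forall p q : Sg R m, phi (lie_poisson p q) = br (phi p) (phi q)].
End Smooth.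

(* canonical bracket on C^infinity(R^2), coordinates x = (q, p) *)
Definition can_br1 (R : realType) (f g : R * R -> R) : R * R -> R :=
  fun x => derive f x (1, 0) * derive g x (0, 1) - derive g x (1, 0) * derive f x (0, 1).

(* canonical bracket on C^infinity(R^{2N}), coordinates x = (q, p) with
   q, p in R^N (row vectors) *)
Definition can_brN (R : realType) (N : nat) (f g : 'rV[R]_N * 'rV[R]_N -> R)
  : 'rV[R]_N * 'rV[R]_N -> R :=
  fun x => \sum_(k < N)
    (derive f x (delta_mx 0 k, 0) * derive g x (0, delta_mx 0 k)
     - derive g x (delta_mx 0 k, 0) * derive f x (0, delta_mx 0 k)).

Definition dotv (R : realType) (N : nat) (u v : 'rV[R]_N) : R :=
  \sum_(k < N) u 0 k * v 0 k.

From HB Require Import structures.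
From mathcomp Require Import all_boot all_order all_algebra.
From mathcomp Require Import all_classical all_reals all_analysis.
From mathcomp Require Import ring.
From mathcomp Require mpoly.
Import (canonicals, coercions) mpoly.
Import Order.TTheory GRing.Theory Num.Theory.
Local Open Scope ring_scope.
Import numFieldNormedType.Exports.

Set Implicit Arguments.
Unset Strict Implicit.

(** The Lie-Poisson bracket and the canonical bracket are both
    biderivations, so by the chain rule the bracket of the images of two
    polynomials [P], [Q] is [\sum_(a, b) d_a P d_b Q {v_a, v_b}], where [v_a] is
    the image of the basis element [a]. Extending [a |-> v_a] multiplicatively
    is therefore a Poisson map as soon as [{v_a, v_b}] is the image of [[a, b]]
    for all basis elements, a finite table that is checked directly in Darboux
    coordinates. The [v_a] are polynomials in continuous linear functionals,
    hence smooth. The one and [N] degree(s) of freedom realisations are the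
    cases [K = 1] and [K = N] of the same computation with [K] Darboux pairs. *)

Section PolynomialFunctions.
Variables (R : realType) (V : normedModType R).

Lemma linear_continuous_derive (f : V -> R) (x : V) : linear f -> continuous f ->
  differentiable f x /\ forall w, derive f x w = f w.
Proof.
move=> f_lin f_cont.
pose fL : {linear V -> R} := HB.pack f (GRing.isLinear.Build _ _ _ _ _ f_lin).
have -> : f = fL by [].
have fL_diff : differentiable fL x by exact: linear_differentiable.
by split=> // w; rewrite deriveE // diff_lin.
Qed.

Lemma derive_addf (f g : V -> R) (x w : V) : differentiable f x -> differentiable g x ->
  derive (fun y => f y + g y) x w = derive f x w + derive g x w.
Proof. by move=> df dg; exact: (deriveD (diff_derivable df) (diff_derivable dg)). Qed.

Lemma derive_mulf (f g : V -> R) (x w : V) : differentiable f x -> differentiable g x ->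
  derive (fun y => f y * g y) x w = f x * derive g x w + g x * derive f x w.
Proof. by move=> df dg; exact: (deriveM (diff_derivable df) (diff_derivable dg)). Qed.

Lemma derive_scalef (c : R) (f : V -> R) (x w : V) : differentiable f x ->
  derive (fun y => c * f y) x w = c * derive f x w.
Proof.
move=> df; rewrite (derive_mulf w (differentiable_cst c x) df).
by rewrite (derive_cst c) mulr0 addr0.
Qed.

Lemma derive_oppf (f : V -> R) (x w : V) : differentiable f x ->
  derive (fun y => - f y) x w = - derive f x w.
Proof.
move=> df; rewrite -mulN1r -(derive_scalef _ w df).
by congr derive; apply: funext => y; rewrite mulN1r.
Qed.

Inductive polyfun : (V -> R) -> Prop :=
  | polyfunC c : polyfun (fun _ => c)
  | polyfun_linear f : linear f -> continuous f -> polyfun f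
  | polyfunD f g : polyfun f -> polyfun g -> polyfun (fun x => f x + g x)
  | polyfunM f g : polyfun f -> polyfun g -> polyfun (fun x => f x * g x).

Lemma polyfunZ (c : R) (f : V -> R) : polyfun f -> polyfun (fun x => c * f x).
Proof. exact: polyfunM (polyfunC c). Qed.

Lemma polyfunN (f : V -> R) : polyfun f -> polyfun (fun x => - f x).
Proof.
have -> : (fun x => - f x) = fun x => -1 * f x by apply: funext => x; rewrite mulN1r.
exact: polyfunZ.
Qed.

Lemma polyfunX (f : V -> R) (k : nat) : polyfun f -> polyfun (fun x => f x ^+ k).
Proof.
move=> pf; elim: k => [|k IH].
  have -> : (fun x => f x ^+ 0) = fun=> 1 by apply: funext => x; rewrite expr0.
  exact: polyfunC.
have -> : (fun x => f x ^+ k.+1) = fun x => f x * f x ^+ k.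
  by apply: funext => x; rewrite exprS.
exact: polyfunM.
Qed.

Lemma polyfun_sum (I : Type) (s : seq I) (F : I -> V -> R) :
  (forall i, polyfun (F i)) -> polyfun (fun x => \sum_(i <- s) F i x).
Proof.
move=> pfF; elim: s => [|i s IH].
  have -> : (fun x => \sum_(i <- [::]) F i x) = fun=> 0.
    by apply: funext => x; rewrite big_nil.
  exact: polyfunC.
have -> : (fun x => \sum_(j <- i :: s) F j x) = fun x => F i x + \sum_(j <- s) F j x.
  by apply: funext => x; rewrite big_cons.
exact: polyfunD.
Qed.

Lemma polyfun_prod (I : Type) (s : seq I) (F : I -> V -> R) :
  (forall i, polyfun (F i)) -> polyfun (fun x => \prod_(i <- s) F i x).
Proof.
move=> pfF; elim: s => [|i s IH].
  have -> : (fun x => \prod_(i <- [::]) F i x) = fun=> 1.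
    by apply: funext => x; rewrite big_nil.
  exact: polyfunC.
have -> : (fun x => \prod_(j <- i :: s) F j x) = fun x => F i x * \prod_(j <- s) F j x.
  by apply: funext => x; rewrite big_cons.
exact: polyfunM.
Qed.

Lemma polyfun_differentiable (f : V -> R) (x : V) : polyfun f -> differentiable f x.
Proof.
move=> pf; elim: pf x => [c|{}f f_lin f_cont|{}f g _ df _ dg|{}f g _ df _ dg] x.
- exact: differentiable_cst.
- by case: (linear_continuous_derive x f_lin f_cont).
- exact: differentiableD.
- exact: differentiableM.
Qed.

Lemma polyfun_derive (f : V -> R) (w : V) : polyfun f -> polyfun (fun x => derive f x w).
Proof.
elim=> [c|{}f f_lin f_cont|{}f g pf IHf pg IHg|{}f g pf IHf pg IHg].
- have -> : (fun x => derive (fun=> c) x w) = fun=> 0.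
    by apply: funext => x; exact: (derive_cst c).
  exact: polyfunC.
- have -> : (fun x => derive f x w) = fun=> f w.
    by apply: funext => x; case: (linear_continuous_derive x f_lin f_cont).
  exact: polyfunC.
- have -> : (fun x => derive (fun y => f y + g y) x w) =
            fun x => derive f x w + derive g x w.
    by apply: funext => x; rewrite derive_addf //; exact: polyfun_differentiable.
  exact: polyfunD.
- have -> : (fun x => derive (fun y => f y * g y) x w) =
            fun x => f x * derive g x w + g x * derive f x w.
    by apply: funext => x; rewrite derive_mulf //; exact: polyfun_differentiable.
  by apply: polyfunD; apply: polyfunM.
Qed.

Lemma polyfun_smooth (f : V -> R) : polyfun f -> smooth f.
Proof.
move=> pf vs x; apply: polyfun_differentiable.
by elim: vs => [|w vs IH] //=; exact: polyfun_derive.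
Qed.

Lemma derive_sumf (I : Type) (s : seq I) (F : I -> V -> R) (x w : V) :
  (forall i, polyfun (F i)) ->
  derive (fun y => \sum_(i <- s) F i y) x w = \sum_(i <- s) derive (F i) x w.
Proof.
move=> pfF; elim: s => [|i s IH].
  have -> : (fun y => \sum_(i <- [::]) F i y) = fun=> 0.
    by apply: funext => y; rewrite big_nil.
  by rewrite (derive_cst (0 : R)) big_nil.
have -> : (fun y => \sum_(j <- i :: s) F j y) = fun y => F i y + \sum_(j <- s) F j y.
  by apply: funext => y; rewrite big_cons.
rewrite derive_addf ?big_cons ?IH //; apply: polyfun_differentiable => //.
exact: polyfun_sum.
Qed.

End PolynomialFunctions.

Section PolynomialEvaluation.
Variables (R : realType) (V : normedModType R) (k : nat) (e : 'I_k -> V -> R).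

Definition mevalf (P : mpoly.mpoly k R) : V -> R := fun x => mpoly.meval (e^~ x) P.

Lemma mevalf0 : mevalf 0 = fun=> 0.
Proof. by apply: funext => x; rewrite /mevalf mpoly.meval0. Qed.

Lemma mevalf1 : mevalf 1 = fun=> 1.
Proof. by apply: funext => x; rewrite /mevalf mpoly.meval1. Qed.

Lemma mevalfD P Q : mevalf (P + Q) = fun x => mevalf P x + mevalf Q x.
Proof. by apply: funext => x; rewrite /mevalf mpoly.mevalD. Qed.

Lemma mevalfZ c P : mevalf (c *: P) = fun x => c * mevalf P x.
Proof. by apply: funext => x; rewrite /mevalf mpoly.mevalZ. Qed.

Lemma mevalfM P Q : mevalf (P * Q) = fun x => mevalf P x * mevalf Q x.
Proof. by apply: funext => x; rewrite /mevalf mpoly.mevalM. Qed.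


Lemma mevalfXU i : mevalf (mpoly.mpolyX R (mpoly.mnm1 i)) = e i.
Proof. by apply: funext => x; rewrite /mevalf mpoly.mevalXU. Qed.

Lemma mevalf_sum (I : Type) (s : seq I) (F : I -> mpoly.mpoly k R) x :
  mevalf (\sum_(i <- s) F i) x = \sum_(i <- s) mevalf (F i) x.
Proof. by rewrite /mevalf raddf_sum. Qed.

Hypothesis polyfun_e : forall i, polyfun (e i).

Lemma polyfun_mevalf P : polyfun (mevalf P).
Proof.
elim/mpoly.mpolyind: P => [|c m P _ _ IH].
  by rewrite mevalf0; exact: polyfunC.
have -> : mevalf (c *: mpoly.mpolyX R m + P) =
          fun x => c * \prod_(i < k) e i x ^+ m i + mevalf P x.
  by apply: funext => x; rewrite /mevalf mpoly.mevalD mpoly.mevalZ mpoly.mevalX.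
apply: polyfunD => //; apply: polyfunZ.
by apply: polyfun_prod => i; exact: polyfunX.
Qed.

Let mevalf_differentiable P x : differentiable (mevalf P) x.
Proof. exact/polyfun_differentiable/polyfun_mevalf. Qed.

Definition chain_rule_for P := forall x w,
  derive (mevalf P) x w = \sum_(i < k) mevalf (mpoly.mderiv i P) x * derive (e i) x w.

Lemma chain_rule1 : chain_rule_for 1.
Proof.
move=> x w; rewrite mevalf1 (derive_cst (1 : R)) big1 // => i _.
by rewrite -mpoly.mpolyC1 mpoly.mderivC mevalf0 mul0r.
Qed.

Lemma chain_ruleD P Q : chain_rule_for P -> chain_rule_for Q -> chain_rule_for (P + Q).
Proof.
move=> dP dQ x w; rewrite mevalfD derive_addf // dP dQ -big_split /=.
by apply: eq_bigr => i _; rewrite mpoly.mderivD mevalfD mulrDl.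
Qed.

Lemma chain_ruleZ c P : chain_rule_for P -> chain_rule_for (c *: P).
Proof.
move=> dP x w; rewrite mevalfZ derive_scalef // dP mulr_sumr.
by apply: eq_bigr => i _; rewrite mpoly.mderivZ mevalfZ mulrA.
Qed.

Lemma chain_ruleM P Q : chain_rule_for P -> chain_rule_for Q -> chain_rule_for (P * Q).
Proof.
move=> dP dQ x w; rewrite mevalfM derive_mulf // dP dQ !mulr_sumr -big_split /=.
by apply: eq_bigr => i _; rewrite mpoly.mderivM mevalfD !mevalfM /=; ring.
Qed.

Lemma chain_ruleXU j : chain_rule_for (mpoly.mpolyX R (mpoly.mnm1 j)).
Proof.
move=> x w; rewrite mevalfXU (bigD1 j) //= big1 ?addr0 => [|i /negbTE nij].
  rewrite mpoly.mderivX mpoly.mnm1E eqxx /= (_ : mpoly.mpolyX _ _ = 1).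
    by rewrite scale1r mevalf1 mul1r.
  rewrite -mpoly.mpolyX0; congr mpoly.mpolyX.
  by apply/mpoly.mnmP => l; rewrite mpoly.mnmBE mpoly.mnm0E subnn.
by rewrite mpoly.mderivX mpoly.mnm1E eq_sym nij /= scale0r mevalf0 mul0r.
Qed.

Theorem derive_mevalf P x w :
  derive (mevalf P) x w = \sum_(i < k) mevalf (mpoly.mderiv i P) x * derive (e i) x w.
Proof.
move: x w; elim/mpoly.mpolyind: P => [|c m P _ _ IH].
  by rewrite -(scale0r 1); apply/chain_ruleZ/chain_rule1.
apply: chain_ruleD => //; apply: chain_ruleZ; rewrite mpoly.mpolyXE_id.
apply: (big_ind chain_rule_for); [exact: chain_rule1 | exact: chain_ruleM |].
move=> i _; elim: (m i) => [|n IHn]; first by rewrite expr0; exact: chain_rule1.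
by rewrite exprS; apply: chain_ruleM => //; exact: chain_ruleXU.
Qed.

End PolynomialEvaluation.

Section Realisation.
Variables (R : realType) (V : normedModType R) (m : nat) (v : gen m -> V -> R).

Definition realise : Sg R m -> V -> R := mevalf (fun i => v (enum_val i)).

Lemma realiseX a : realise (gX R a) = v a.
Proof. by rewrite /realise mevalfXU enum_rankK. Qed.

Lemma realise0 : realise 0 = fun=> 0.
Proof. exact: mevalf0. Qed.

Lemma realiseN P : realise (- P) = fun x => - realise P x.
Proof. by apply: funext => x; rewrite /realise /mevalf mpoly.mevalN. Qed.

Lemma realiseMn P n : realise (P *+ n) = fun x => realise P x *+ n.
Proof. by apply: funext => x; rewrite /realise /mevalf mpoly.mevalMn. Qed.

Hypothesis polyfun_v : forall a, polyfun (v a).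

Lemma derive_realise P x d :
  derive (realise P) x d = \sum_(a : gen m) realise (gD a P) x * derive (v a) x d.
Proof.
rewrite /realise derive_mevalf => [|i]; last exact: polyfun_v.
rewrite (reindex (@enum_rank _)) /=; last by apply: onW_bij; exact: enum_rank_bij.
by apply: eq_bigr => a _; rewrite enum_rankK.
Qed.

Variables (K : nat) (u w : 'I_K -> V).

Definition darboux_br (f g : V -> R) : V -> R := fun x =>
  \sum_(k < K) (derive f x (u k) * derive g x (w k) - derive g x (u k) * derive f x (w k)).

Lemma darboux_br_realise P Q x :
  darboux_br (realise P) (realise Q) x =
  \sum_(a : gen m) \sum_(b : gen m)
    realise (gD a P) x * realise (gD b Q) x * darboux_br (v a) (v b) x.
Proof.
rewrite /darboux_br; under eq_bigr do rewrite !derive_realise.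
under [RHS]eq_bigr do under eq_bigr do rewrite mulr_sumr.
under [RHS]eq_bigr do rewrite exchange_big /=.
rewrite [RHS]exchange_big /=; apply: eq_bigr => k _.
rewrite !big_distrlr /= [X in _ - X]exchange_big /= -sumrB.
apply: eq_bigr => a _; rewrite -sumrB; apply: eq_bigr => b _; ring.
Qed.

Theorem poisson_hom_realise :
  (forall a b x, darboux_br (v a) (v b) x = realise (lie_br R a b) x) ->
  poisson_hom darboux_br realise.
Proof.
move=> brackets; split.
- by move=> P; apply/polyfun_smooth/polyfun_mevalf => i; exact: polyfun_v.
- by move=> c P Q; rewrite /realise mevalfD mevalfZ.
- by move=> P Q; rewrite /realise mevalfM.
- by rewrite /realise mevalf1.
move=> P Q; apply: funext => x; rewrite darboux_br_realise {1}/realise mevalf_sum.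
apply: eq_bigr => a _; rewrite mevalf_sum; apply: eq_bigr => b _.
by rewrite brackets /realise !mevalfM /=; ring.
Qed.

End Realisation.

Lemma sum_mul_delta (R : pzRingType) (I : finType) (c : I -> R) (j : I) :
  \sum_(k : I) c k * (k == j)%:R = c j.
Proof.
rewrite (bigD1 j) //= eqxx mulr1 big1 ?addr0 // => k /negbTE ->.
by rewrite mulr0.
Qed.

Section DarbouxCoordinates.
Variables (R : realType) (V : normedModType R) (K : nat).
Variables (q p : 'I_K -> V -> R) (u w : 'I_K -> V).
Hypotheses (q_lin : forall k, linear (q k)) (q_cont : forall k, continuous (q k)).
Hypotheses (p_lin : forall k, linear (p k)) (p_cont : forall k, continuous (p k)).
Hypotheses (q_u : forall j k, q k (u j) = (k == j)%:R) (q_w : forall j k, q k (w j) = 0).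
Hypotheses (p_u : forall j k, p k (u j) = 0) (p_w : forall j k, p k (w j) = (k == j)%:R).
Variables (m : nat) (alpha : 'I_m -> 'I_K -> R).

Definition gen_image (g : gen m) : V -> R := fun x =>
  match g with
  | GH => \sum_(k < K) q k x * p k x
  | GXm => - 2^-1 * \sum_(k < K) q k x * q k x
  | GXp => 2^-1 * \sum_(k < K) p k x * p k x
  | GYm i => - \sum_(k < K) alpha i k * q k x
  | GYp i => \sum_(k < K) alpha i k * p k x
  | GZ z => \sum_(k < K) alpha (sval z).1 k * alpha (sval z).2 k
  end.

Definition gen_image_dq (g : gen m) (x : V) (k : 'I_K) : R :=
  match g with
  | GH => p k x | GXm => - q k x | GYm i => - alpha i k | _ => 0
  end.

Definition gen_image_dp (g : gen m) (x : V) (k : 'I_K) : R :=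
  match g with
  | GH => q k x | GXp => p k x | GYp i => alpha i k | _ => 0
  end.

Let polyfun_q k : polyfun (q k). Proof. exact: polyfun_linear. Qed.
Let polyfun_p k : polyfun (p k). Proof. exact: polyfun_linear. Qed.

Lemma polyfun_gen_image g : polyfun (gen_image g).
Proof.
by case: g => [|||i|i|z]; rewrite /gen_image;
  do ?[apply: polyfunN | apply: polyfunZ | apply: polyfun_sum => k | apply: polyfunM
        | apply: polyfunC].
Qed.

Lemma derive_gen_image g x d :
  derive (gen_image g) x d =
  \sum_(k < K) (gen_image_dq g x k * q k d + gen_image_dp g x k * p k d).
Proof.
have derive_q k y : derive (q k) y d = q k d.
  by case: (linear_continuous_derive y (q_lin k) (@q_cont k)).
have derive_p k y : derive (p k) y d = p k d.
  by case: (linear_continuous_derive y (p_lin k) (@p_cont k)).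
have dq k y := polyfun_differentiable y (polyfun_q k).
have dp k y := polyfun_differentiable y (polyfun_p k).
have dsum (F : 'I_K -> V -> R) : (forall k, polyfun (F k)) ->
    differentiable (fun y => \sum_(k < K) F k y) x.
  by move=> pF; exact/polyfun_differentiable/polyfun_sum.
case: g => [|||i|i|z]; rewrite /gen_image /=.
- rewrite derive_sumf => [|k]; last exact: polyfunM.
  by apply: eq_bigr => k _; rewrite derive_mulf // derive_q derive_p /=; ring.
- rewrite (derive_scalef (- 2^-1)); last by apply: dsum => k; exact: polyfunM.
  rewrite derive_sumf => [|k]; last exact: polyfunM.
  by rewrite mulr_sumr; apply: eq_bigr => k _; rewrite derive_mulf // derive_q /=; field.
- rewrite (derive_scalef 2^-1); last by apply: dsum => k; exact: polyfunM.
  rewrite derive_sumf => [|k]; last exact: polyfunM.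
  by rewrite mulr_sumr; apply: eq_bigr => k _; rewrite derive_mulf // derive_p /=; field.
- rewrite derive_oppf; last by apply: dsum => k; exact: polyfunZ.
  rewrite derive_sumf => [|k]; last exact: polyfunZ.
  by rewrite -sumrN; apply: eq_bigr => k _; rewrite derive_scalef // derive_q /=; ring.
- rewrite derive_sumf => [|k]; last exact: polyfunZ.
  by apply: eq_bigr => k _; rewrite derive_scalef // derive_p /=; ring.
- rewrite (derive_cst (\sum_(k < K) alpha (sval z).1 k * alpha (sval z).2 k)).
  by rewrite big1 // => k _; ring.
Qed.

Lemma derive_gen_image_u g x j : derive (gen_image g) x (u j) = gen_image_dq g x j.
Proof.
rewrite derive_gen_image -[RHS](sum_mul_delta _ j).
by apply: eq_bigr => k _; rewrite q_u p_u mulr0 addr0.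
Qed.

Lemma derive_gen_image_w g x j : derive (gen_image g) x (w j) = gen_image_dp g x j.
Proof.
rewrite derive_gen_image -[RHS](sum_mul_delta _ j).
by apply: eq_bigr => k _; rewrite q_w p_w mulr0 add0r.
Qed.

Lemma gen_image_brackets a b x :
  darboux_br u w (gen_image a) (gen_image b) x = realise gen_image (lie_br R a b) x.
Proof.
rewrite /darboux_br; under eq_bigr do rewrite !derive_gen_image_u !derive_gen_image_w.
case: a => [|||i|i|z]; case: b => [|||j|j|z'] /=;
  rewrite ?(realiseN, realiseMn, realise0) /= ?realiseX /gen_image;
  rewrite ?mulr_sumr -?sumrMnl -?sumrN /zmk /=; try case: ifP => _ /=;
  try (by apply: big1 => k _; ring);
  by apply: eq_bigr => k _; field.
Qed.

Theorem darboux_realisation :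
  exists phi : Sg R m -> (V -> R),
    poisson_hom (darboux_br u w) phi /\ forall g, phi (gX R g) = gen_image g.
Proof.
exists (realise gen_image); split; last exact: realiseX.
exact: (poisson_hom_realise polyfun_gen_image gen_image_brackets).
Qed.

End DarbouxCoordinates.

Lemma can_br1_realisation (R : realType) (m : nat) (alpha : 'I_m -> R) :
  exists phi : Sg R m -> (R * R -> R),
    poisson_hom (@can_br1 R) phi /\
    forall g, phi (gX R g) = gen_image (fun=> fst) (fun=> snd) (fun i (_ : 'I_1) => alpha i) g.
Proof.
have -> : @can_br1 R = darboux_br (fun _ : 'I_1 => ((1, 0) : R * R)) (fun=> (0, 1)).
  by apply/funext => f; apply/funext => g; apply/funext => x; rewrite /darboux_br big_ord1.
apply: darboux_realisation => [k a y z|k x|k a y z|k x|j k|j k|j k|j k] //=;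
  by [exact: cvg_fst | exact: cvg_snd | rewrite !ord1].
Qed.

Lemma can_brN_realisation (R : realType) (N m : nat) (alpha : 'I_m -> 'rV[R]_N) :
  exists phi : Sg R m -> ('rV[R]_N * 'rV[R]_N -> R),
    poisson_hom (@can_brN R N) phi /\
    forall g, phi (gX R g) =
      gen_image (fun k (x : 'rV_N * 'rV_N) => x.1 0 k) (fun k (x : 'rV_N * 'rV_N) => x.2 0 k)
        (fun i k => alpha i 0 k) g.
Proof.
have -> : @can_brN R N = darboux_br (fun k => (delta_mx 0 k, 0)) (fun k => (0, delta_mx 0 k))
  by [].
apply: darboux_realisation => [k a y z|k|k a y z|k|j k|j k|j k|j k]; rewrite /= ?mxE ?eqxx //.
- move=> x; apply: (@continuous_comp _ _ _ fst (fun M : 'rV[R]_N => M 0 k)).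
    exact: cvg_fst.
  exact: coord_continuous.
- move=> x; apply: (@continuous_comp _ _ _ snd (fun M : 'rV[R]_N => M 0 k)).
    exact: cvg_snd.
  exact: coord_continuous.
Qed.

Unset Implicit Arguments.
Set Strict Implicit.

Theorem proposition5p1 (R : realType) (n : nat) (hn : (2 <= n)%N) :
  (forall alpha : 'I_(n - 2) -> R,
     exists phi : Sg R (n - 2) -> (R * R -> R),
       poisson_hom (@can_br1 R) phi /\
       forall g : gen (n - 2),
         phi (gX R g) =
         (fun x : R * R =>
            let q := x.1 in let p := x.2 in
            match g with
            | GH => q * p
            | GXm => - (q ^+ 2 / 2)
            | GXp => p ^+ 2 / 2
            | GYm i => - (alpha i * q)
            | GYp i => alpha i * p
            | GZ z => alpha (sval z).1 * alpha (sval z).2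
            end))
  /\
  (forall (N : nat), (1 <= N)%N ->
   forall alpha : 'I_(n - 2) -> 'rV[R]_N,
     exists phi : Sg R (n - 2) -> ('rV[R]_N * 'rV[R]_N -> R),
       poisson_hom (@can_brN R N) phi /\
       forall g : gen (n - 2),
         phi (gX R g) =
         (fun x : 'rV[R]_N * 'rV[R]_N =>
            let q := x.1 in let p := x.2 in
            match g with
            | GH => dotv q p
            | GXm => - (dotv q q / 2)
            | GXp => dotv p p / 2
            | GYm i => - dotv (alpha i) q
            | GYp i => dotv (alpha i) p
            | GZ z => dotv (alpha (sval z).1) (alpha (sval z).2)
            end)).
Proof.
split=> [alpha | N _ alpha].
- have [phi [hom gens]] := can_br1_realisation alpha.
  exists phi; split=> // g; rewrite gens; apply: funext => x.
  by case: g => [|||i|i|z]; rewrite /gen_image /= ?big_ord1 /=; field.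
- have [phi [hom gens]] := can_brN_realisation alpha.
  exists phi; split=> // g; rewrite gens; apply: funext => x.
  by case: g => [|||i|i|z]; rewrite /gen_image /dotv /=; field.
Qed.
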